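(* Let $A$ be a binary matrix and let $U$ and $V$ be two distinct bases of $A$. Then at most one of $U$, $V$ spans the other; this holds both in the binary setting and in the boolean setting.
   Context: A set $X$ of $\{0,1\}$-vectors spans a vector $y$ in the binary (resp. boolean) sense if $y=\sum_{x\in X}c_xx$ with $c_x\in\{0,1\}$ using ordinary (resp. boolean, $1+1=1$) addition; $X$ spans a set $Y$ if it spans each vector of $Y$. A binary (resp. boolean) base of an $n\times m$ binary matrix $A$ is a set of $\{0,1\}$ column vectors of length $n$ spanning every column of $A$ in the corresponding sense, of minimum cardinality among such spanning sets. *)

From mathcomp Require Import all_boot all_algebra.
Set Implicit Arguments. Unset Strict Implicit. Unset Printing Implicit Defensive.

Notation bvec n := 'cV[bool]_n.

(* Binary span: y = sum_{x in X} c_x x with c_x in {0,1}, ordinary (integer)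
   addition; the coefficients are encoded by the subset S = {x | c_x = 1}. *)
Definition binary_spans n (X : {set bvec n}) (y : bvec n) : Prop :=
  exists2 S : {set bvec n}, S \subset X &
    forall i : 'I_n, nat_of_bool (y i ord0) = (\sum_(x in S) nat_of_bool (x i ord0))%N.

(* Boolean span: same with boolean addition (1+1=1), i.e. entrywise "or". *)
Definition boolean_spans n (X : {set bvec n}) (y : bvec n) : Prop :=
  exists2 S : {set bvec n}, S \subset X &
    forall i : 'I_n, y i ord0 = [exists x in S, x i ord0].

Definition spans_set n (sp : {set bvec n} -> bvec n -> Prop)
  (X Y : {set bvec n}) : Prop := forall y, y \in Y -> sp X y.

Definition spans_matrix n m (sp : {set bvec n} -> bvec n -> Prop)
  (X : {set bvec n}) (A : 'M[bool]_(n, m)) : Prop := forall j : 'I_m, sp X (col j A).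

Definition is_base n m (sp : {set bvec n} -> bvec n -> Prop)
  (A : 'M[bool]_(n, m)) (U : {set bvec n}) : Prop :=
  spans_matrix sp U A /\
  forall W : {set bvec n}, spans_matrix sp W A -> #|U| <= #|W|.

From mathcomp Require Import all_boot all_algebra.

Set Implicit Arguments.
Unset Strict Implicit.
Unset Printing Implicit Defensive.

(* Both spans have the same two features: a vector is only ever spanned by
   vectors whose support it contains, and spanning is transitive.  So if the
   bases U and V span each other and u lies in U but not in V, then u is a
   sum of members of V below u, each of which is a sum of members of U below
   it; none of those can be u itself (it would then equal a member of V), so
   U minus u already spans u, hence U, hence A — contradicting minimality. *)

Definition bvec_le n (x y : bvec n) := [forall i, x i ord0 ==> y i ord0].

Lemma bvec_le_coord n (x y : bvec n) i : bvec_le x y -> x i ord0 -> y i ord0.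
Proof. by move/forallP/(_ i)/implyP. Qed.

Lemma bvec_le_trans n : transitive (@bvec_le n).
Proof.
move=> y x z /forallP xy /forallP yz; apply/forallP => i.
by apply/implyP => /(implyP (xy i)) /(implyP (yz i)).
Qed.

Lemma bvec_le_anti n : antisymmetric (@bvec_le n).
Proof.
move=> x y /andP[/forallP xy /forallP yx]; apply/matrixP => i j.
by rewrite (ord1 j); apply/idP/idP; [apply/implyP: (xy i) | apply/implyP: (yx i)].
Qed.

Section BasesSpanningEachOther.

Variables (n : nat) (sp : {set bvec n} -> bvec n -> Prop).
Implicit Types (X Y : {set bvec n}) (y z : bvec n).
Hypothesis sp_mem : forall X y, y \in X -> sp X y.
Hypothesis sp_subset : forall X (X' : {set bvec n}) y, X \subset X' -> sp X y -> sp X' y.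
Hypothesis sp_below : forall X y, sp X y -> sp [set x in X | bvec_le x y] y.
Hypothesis sp_trans : forall X Y z, spans_set sp X Y -> sp Y z -> sp X z.
Arguments sp_subset {X X' y}.
Arguments sp_below {X y}.
Arguments sp_trans {X Y z}.

Lemma base_sub_of_spans {m} {A : 'M[bool]_(n, m)} {U V} :
  is_base sp A U -> spans_set sp U V -> spans_set sp V U -> U \subset V.
Proof.
move=> [spanA minU] sUV sVU; apply/subsetP => u uU; apply/negPn/negP => uV.
pose S := [set v in V | bvec_le v u].
have U'S : spans_set sp (U :\ u) S.
  move=> v; rewrite inE => /andP[vV vu].
  apply: sp_subset (sp_below (sUV v vV)); apply/subsetP => x; rewrite !inE.
  case/andP=> xU xv; rewrite xU andbT; apply: contraNneq uV => xu.
  by have -> : u = v by apply: bvec_le_anti; rewrite vu andbT -xu.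
have U'U : spans_set sp (U :\ u) U.
  move=> x xU; have [->|xu] := eqVneq x u.
    exact: sp_trans U'S (sp_below (sVU u uU)).
  by apply: sp_mem; rewrite in_setD1 xu.
have := minU (U :\ u) (fun j => sp_trans U'U (spanA j)).
by rewrite (cardsD1 u U) uU ltnn.
Qed.

Lemma bases_spanning_each_other_eq {m} (A : 'M[bool]_(n, m)) U V :
  is_base sp A U -> is_base sp A V ->
  spans_set sp U V -> spans_set sp V U -> U = V.
Proof.
move=> bU bV sUV sVU.
by apply/eqP; rewrite eqEsubset (base_sub_of_spans bU) ?(base_sub_of_spans bV).
Qed.

End BasesSpanningEachOther.

Section SpannedBy.

Variables (n : nat) (is_sum : {set bvec n} -> bvec n -> Prop).
Implicit Types (X Y S : {set bvec n}) (x y z : bvec n).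
Hypothesis is_sum_set1 : forall y, is_sum [set y] y.
Hypothesis is_sum_le : forall S x y, is_sum S y -> x \in S -> bvec_le x y.

Definition spanned_by X y := exists2 S : {set bvec n}, S \subset X & is_sum S y.

Lemma spanned_by_mem X y : y \in X -> spanned_by X y.
Proof. by move=> yX; exists [set y]; rewrite ?sub1set. Qed.

Lemma spanned_by_subset X (X' : {set bvec n}) y :
  X \subset X' -> spanned_by X y -> spanned_by X' y.
Proof. by move=> sXX' [S SX Sy]; exists S => //; apply: subset_trans sXX'. Qed.

Lemma spanned_by_below X y :
  spanned_by X y -> spanned_by [set x in X | bvec_le x y] y.
Proof.
move=> [S SX Sy]; exists S => //; apply/subsetP => x xS.
by rewrite inE (subsetP SX) // (is_sum_le Sy).
Qed.

Lemma spanned_by_bases_eq m (A : 'M[bool]_(n, m)) U V :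
  (forall X Y z, spans_set spanned_by X Y -> spanned_by Y z -> spanned_by X z) ->
  is_base spanned_by A U -> is_base spanned_by A V ->
  spans_set spanned_by U V -> spans_set spanned_by V U -> U = V.
Proof.
move=> spanned_by_trans; apply: bases_spanning_each_other_eq => //.
- exact: spanned_by_mem.
- exact: spanned_by_subset.
- exact: spanned_by_below.
Qed.

End SpannedBy.

Section Boolean.

Variable n : nat.
Implicit Types (X Y S : {set bvec n}) (x y z : bvec n).

Definition boolean_sum S y := forall i, y i ord0 = [exists x in S, x i ord0].

Lemma boolean_sum_set1 y : boolean_sum [set y] y.
Proof.
move=> i; apply/idP/existsP => [yi | [x /andP[/set1P -> //]]].
by exists y; rewrite set11.
Qed.

Lemma boolean_sum_le S x y : boolean_sum S y -> x \in S -> bvec_le x y.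
Proof.
move=> Sy xS; apply/forallP => i; apply/implyP => xi.
by rewrite Sy; apply/existsP; exists x; rewrite xS.
Qed.

Lemma boolean_spans_trans X Y z :
  spans_set (@boolean_spans n) X Y -> boolean_spans Y z -> boolean_spans X z.
Proof.
move=> sXY [S SY Sz]; exists [set x in X | bvec_le x z].
  by apply/subsetP => x; rewrite inE => /andP[].
move=> i; apply/idP/existsP => [| [x]]; last first.
  by rewrite inE => /andP[/andP[_ xz]]; apply: bvec_le_coord xz.
rewrite Sz => /existsP[y /andP[yS yi]].
have [T TX Ty] := sXY y (subsetP SY y yS).
move: yi; rewrite Ty => /existsP[x /andP[xT xi]].
exists x; rewrite xi andbT inE (subsetP TX) //=.
exact: bvec_le_trans (boolean_sum_le Ty xT) (boolean_sum_le Sz yS).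
Qed.

End Boolean.

Section Binary.

Variable n : nat.
Implicit Types (X Y S : {set bvec n}) (x y z : bvec n).

Definition binary_sum S y :=
  forall i, nat_of_bool (y i ord0) = (\sum_(x in S) nat_of_bool (x i ord0))%N.

Definition ones_at S (i : 'I_n) := [set x in S | x i ord0].

Lemma sum_ones_at S i :
  (\sum_(x in S) nat_of_bool (x i ord0))%N = #|ones_at S i|.
Proof. by rewrite -big_mkcondr sum1_card cardsE. Qed.

Lemma binary_sum_set1 y : binary_sum [set y] y.
Proof. by move=> i; rewrite big_set1. Qed.

Lemma binary_sum_le S x y : binary_sum S y -> x \in S -> bvec_le x y.
Proof.
move=> Sy xS; apply/forallP => i; apply/implyP => xi.
apply: contraTT (xS) => /negbTE yi.
have /eqP : #|ones_at S i| = 0 by rewrite -sum_ones_at -Sy yi.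
by rewrite cards_eq0 => /eqP/setP/(_ x); rewrite !inE xi andbT => ->.
Qed.

(* The union of the chosen spanning sets works because a coordinate equal to
   1 in z is 1 in exactly one summand y, and then in exactly one member of
   the set chosen for y; coordinates equal to 0 stay 0 all the way down. *)
Lemma binary_spans_trans X Y z :
  spans_set (@binary_spans n) X Y -> binary_spans Y z -> binary_spans X z.
Proof.
move=> sXY [S SY Sz].
have /fin_all_exists [T TXy] : forall y, exists T : {set bvec n},
    y \in Y -> T \subset X /\ binary_sum T y.
  move=> y; case: (boolP (y \in Y)) => [/sXY [T TX Ty] | _]; last by exists set0.
  by exists T.
have TX y : y \in S -> T y \subset X by move/(subsetP SY)/TXy => [].
have Ty y : y \in S -> binary_sum (T y) y by move/(subsetP SY)/TXy => [].
exists (\bigcup_(y in S) T y); first by apply/bigcupsP.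
move=> i; rewrite sum_ones_at.
have ones_cup : ones_at (\bigcup_(y in S) T y) i =
                \bigcup_(y in ones_at S i) ones_at (T y) i.
  apply/setP => x; rewrite inE; apply/andP/bigcupP => [[/bigcupP[y yS xT] xi]|].
    exists y; last by rewrite inE xT.
    by rewrite inE yS (bvec_le_coord (binary_sum_le (Ty y yS) xT)).
  case=> y; rewrite !inE => /andP[yS _] /andP[xT xi].
  by split=> //; apply/bigcupP; exists y.
have := Sz i; rewrite sum_ones_at ones_cup; case: (z i ord0) => /= [|S0].
  move/esym/eqP/cards1P => [y Sy]; rewrite Sy big_set1.
  have /[!inE] /andP[yS yi] : y \in ones_at S i by rewrite Sy set11.
  by rewrite -sum_ones_at -Ty // yi.
move/esym/eqP: S0; rewrite cards_eq0 => /eqP ->.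
by rewrite big_set0 cards0.
Qed.

End Binary.

Theorem mainTheorem18 (n m : nat) (A : 'M[bool]_(n, m)) (U V : {set 'cV[bool]_n}) :
  U != V ->
  (is_base (@binary_spans n) A U -> is_base (@binary_spans n) A V ->
     ~ (spans_set (@binary_spans n) U V /\ spans_set (@binary_spans n) V U)) /\
  (is_base (@boolean_spans n) A U -> is_base (@boolean_spans n) A V ->
     ~ (spans_set (@boolean_spans n) U V /\ spans_set (@boolean_spans n) V U)).
Proof.
move=> /eqP neqUV; split=> bU bV [sUV sVU]; apply: neqUV.
- exact: (spanned_by_bases_eq (@binary_sum_set1 n) (@binary_sum_le n)
            (@binary_spans_trans n) bU bV sUV sVU).
- exact: (spanned_by_bases_eq (@boolean_sum_set1 n) (@boolean_sum_le n)
            (@boolean_spans_trans n) bU bV sUV sVU).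
Qed.
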